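(* Let $m\ge 2$. (1) If $m$ is even: $\mathrm{Spec}(\Gamma_{T_{4m}})=\{[0]^{m-2},[-1]^1,[\tfrac{1+\sqrt{8m-7}}{2}]^1,[\tfrac{1-\sqrt{8m-7}}{2}]^1\}$, $E=1+\sqrt{8m-7}$; $\mathrm{L\text{-}Spec}=\{[0]^1,[2]^{m-2},[m+1]^2\}$, $LE=\frac{4(m-1)(m-2)}{m+1}+4$; $\mathrm{Q\text{-}Spec}=\{[2]^{m-2},[m-1]^1,[\tfrac{m+3+\sqrt{(m-1)(m+7)}}{2}]^1,[\tfrac{m+3-\sqrt{(m-1)(m+7)}}{2}]^1\}$, and $SE=4$ if $m=2$, $SE=\frac{4(m-1)(m-2)}{m+1}+(m-1)(\sqrt{1+\frac{8}{m-1}}-1)$ if $m\ne2$. (2) If $m$ is odd: $\mathrm{Spec}(\Gamma_{T_{4m}})=\{[0]^{m-1},[2\sqrt{\tfrac{m-1}{2}}]^1,[-2\sqrt{\tfrac{m-1}{2}}]^1\}$, $E=4\sqrt{\frac{m-1}{2}}$; $\mathrm{L\text{-}Spec}=\mathrm{Q\text{-}Spec}=\{[0]^1,[2]^{m-2},[m-1]^1,[m+1]^1\}$, and $LE=SE=\frac{4(m-1)(m-3)}{m+1}+4$.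
   Context: $T_{4m}=\langle x,y\mid x^{2m}=1,\ x^m=y^2,\ y^{-1}xy=x^{-1}\rangle$ (dicyclic group). For a finite non-abelian group $G$ with center $Z(G)$, the NCCC-graph $\Gamma_G$ has vertex set $\{x^G: x\in G\setminus Z(G)\}$ ($x^G$ the conjugacy class of $x$), distinct vertices $x^G,y^G$ adjacent iff $x'y'\neq y'x'$ for all $x'\in x^G,y'\in y^G$. For a simple graph with adjacency matrix $A$, degree matrix $D$, $L=D-A$, $Q=D+A$; Spec, L-Spec, Q-Spec are eigenvalue multisets of $A,L,Q$, $[\lambda]^k$ meaning eigenvalue $\lambda$ of multiplicity $k$ (multiplicity $0$ means absent). $E=\sum_{\lambda\in\mathrm{Spec}}|\lambda|$; with $\Delta=2|E(\mathcal G)|/|V(\mathcal G)|$, $LE=\sum_{\beta\in\mathrm{L\text{-}Spec}}|\beta-\Delta|$, $SE=\sum_{\gamma\in\mathrm{Q\text{-}Spec}}|\gamma-\Delta|$. All quantities refer to $\Gamma_{T_{4m}}$. *)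

From HB Require Import structures.
From mathcomp Require Import all_boot all_order all_algebra all_fingroup all_solvable.
Set Implicit Arguments. Unset Strict Implicit. Unset Printing Implicit Defensive.
Import Order.TTheory GRing.Theory Num.Theory.
Local Open Scope ring_scope.

Section NCCC.
Variable gT : finGroupType.
Local Open Scope group_scope.

Definition nccc_vertices (G : {group gT}) : {set {set gT}} :=
  [set x ^: G | x in G :\: 'Z(G)].

Definition nccc_adj (C D : {set gT}) : bool :=
  (C != D) && [forall a in C, forall b in D, a * b != b * a].
End NCCC.

Section Spectral.
Variable R : rcfType.

Definition nccc_adjmx (gT : finGroupType) (G : {group gT})
  : 'M[R]_#|nccc_vertices G| :=
  \matrix_(i, j) (nccc_adj (enum_val i) (enum_val j))%:R.

Definition degmx n (A : 'M[R]_n) : 'M[R]_n := diag_mx (\row_i \sum_j A i j).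
Definition laplacian n (A : 'M[R]_n) : 'M[R]_n := degmx A - A.
Definition signless_laplacian n (A : 'M[R]_n) : 'M[R]_n := degmx A + A.

Definition avg_degree n (A : 'M[R]_n) : R := (\sum_i \sum_j A i j) / n%:R.

Definition is_spectrum n (M : 'M[R]_n) (s : seq R) : Prop :=
  char_poly M = \prod_(l <- s) ('X - l%:P).

Definition spec_energy n (M : 'M[R]_n) (c e : R) : Prop :=
  exists s, is_spectrum M s /\ e = \sum_(l <- s) `|l - c|.
End Spectral.

(* The non-central classes of T_4m are (x^l)^G = {x^l, x^-l} for 0 < l < m and
   the two classes (x^p y)^G, distinguished by the parity of p.  Powers of x
   commute, so x-classes are never adjacent; a y-class and an x-class always
   are; and the two y-classes are adjacent exactly when m is even, since for m
   odd x^(q+m) y lies in the other class and commutes with x^q y.  With the two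
   y-classes first, the adjacency matrix, its Laplacian and its signless
   Laplacian all have the two-hub block shape [hub_mx], whose characteristic
   polynomial is computed once by a Schur complement.  The energies follow by
   placing the average degree among the eigenvalues. *)

From HB Require Import structures.
From mathcomp Require Import all_boot all_order all_algebra all_fingroup all_solvable.
From mathcomp Require Import ring lra zify.
Set Implicit Arguments. Unset Strict Implicit. Unset Printing Implicit Defensive.
Import Order.TTheory GRing.Theory Num.Theory.
Local Open Scope ring_scope.

Lemma det_mx22 (R : comNzRingType) (M : 'M[R]_2) :
  \det M = M 0 0 * M 1 1 - M 0 1 * M 1 0.
Proof.
rewrite (expand_det_row _ 0) !big_ord_recl big_ord0 addr0 /cofactor !det_mx11 !mxE /=.
rewrite !expr0 !expr1 mul1r mulN1r mulrN.
have lift_val (u v : 'I_2) : val u = val v -> u = v by exact: val_inj.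
by rewrite [lift 0 0](lift_val _ 1) // [lift 1 0](lift_val _ 0).
Qed.

Lemma char_poly_reindex (R : comNzRingType) n (A B : 'M[R]_n) (f : 'I_n -> 'I_n) :
  injective f -> (forall i j, A (f i) (f j) = B i j) -> char_poly A = char_poly B.
Proof.
move=> finj hAB; set s := perm finj; rewrite /char_poly.
have -> : char_poly_mx B = row_perm s (col_perm s (char_poly_mx A)).
  by apply/matrixP=> i j; rewrite !mxE !permE (inj_eq finj) hAB.
rewrite row_permE col_permE !det_mulmx mulrCA mulrA -det_mulmx.
by rewrite det_mulmx -mulrA -det_mulmx -perm_mxM mulgV perm_mx1 det1 mulr1.
Qed.

Lemma prodr_nseq (R : comNzRingType) (T : Type) (F : T -> R) a n :
  \prod_(l <- nseq n a) F l = F a ^+ n.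
Proof. by rewrite big_nseq iter_mulr_1. Qed.

Lemma sumr_nseq (R : nmodType) (T : Type) (F : T -> R) a n :
  \sum_(l <- nseq n a) F l = F a *+ n.
Proof. by rewrite big_nseq iter_addr_0. Qed.

Lemma mulXsubC_vieta (R : comNzRingType) (r1 r2 s p : R) : r1 + r2 = s -> r1 * r2 = p ->
  ('X - r1%:P) * ('X - r2%:P) = 'X * 'X - s%:P * 'X + p%:P.
Proof. by move=> <- <-; rewrite polyCD polyCM; ring. Qed.

(** * Two-hub matrices *)

Section HubMatrix.
Variable R : idomainType.

(* Two hubs (indices 0 and 1) joined to each other by [d] and to each of [k]
   rim vertices by [c]; [b] and [a] are the diagonal entries. *)
Definition hub_mx k (a b c d : R) : 'M[R]_(2 + k) :=
  block_mx (\matrix_(i, j) (if i == j then b else d)) (const_mx c) (const_mx c) a%:M.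

Lemma char_poly_mx_hub k a b c d :
  char_poly_mx (hub_mx k a b c d) =
  block_mx (char_poly_mx (\matrix_(i, j) (if i == j then b else d)))
           (const_mx (- c%:P)) (const_mx (- c%:P)) ('X - a%:P)%:M.
Proof.
rewrite /char_poly_mx scalar_mx_block map_block_mx opp_block_mx add_block_mx.
rewrite !map_const_mx map_scalar_mx /= !sub0r (raddfB (@scalar_mx _ k)).
by congr block_mx; apply/matrixP => i j; rewrite !mxE.
Qed.

Lemma char_poly_hub k a b c d : (0 < k)%N ->
  char_poly (hub_mx k a b c d) = ('X - a%:P) ^+ k.-1 * ('X - (b - d)%:P) *
     (('X - a%:P) * ('X - (b + d)%:P) - (k%:R * 2 * c ^+ 2)%:P).
Proof.
case: k => [//|k] _ /=; set t := 'X - a%:P.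
have t2_neq0 : t ^+ 2 != 0 by rewrite expf_neq0 // polyXsubC_eq0.
apply: (mulIf t2_neq0).
(* Right multiplication by [E], of determinant [t ^+ 2], clears the lower-left
   block: a Schur complement. *)
pose E := block_mx (t%:M : 'M_2) 0 (const_mx c%:P : 'M_(k.+1, 2)) 1%:M.
have detE : \det E = t ^+ 2 by rewrite det_lblock det_scalar det1 mulr1.
rewrite -{1}detE /char_poly -det_mulmx char_poly_mx_hub mulmx_block !mulmx0 !mulmx1 !add0r -/t.
have -> : const_mx (- c%:P) *m t%:M + t%:M *m const_mx c%:P = 0 :> 'M_(k.+1, 2).
  by apply/matrixP => i j; rewrite mul_mx_scalar mul_scalar_mx !mxE; ring.
rewrite det_ublock det_scalar det_mx22 mul_mx_scalar.
have cc (i j : 'I_2) : \sum_(l < k.+1) (const_mx (- c%:P) : 'M_(2, k.+1)) i l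
    * (const_mx c%:P : 'M_(k.+1, 2)) l j = - (c%:P * c%:P) * k.+1%:R.
  by under eq_bigr do rewrite !mxE; rewrite sumr_const card_ord mulr_natr mulNr.
rewrite !mxE /= !cc !polyCB !polyCD !polyCM !polyC_natr exprS; ring.
Qed.

End HubMatrix.

Section HubLaplacian.
Variable R : rcfType.

Lemma hub_rowsum k (c d : R) i :
  \sum_j hub_mx k 0 0 c d i j = if (i < 2)%N then d + c * k%:R else c *+ 2.
Proof.
rewrite big_split_ord /=; case: (split_ordP i) => i' -> /=.
  under eq_bigr do rewrite block_mxEul mxE; under [X in _ + X]eq_bigr do rewrite block_mxEur mxE.
  rewrite sumr_const card_ord mulr_natr !big_ord_recl big_ord0.
  by case: i' => [[|[|//]] ?]; rewrite /= ?add0r ?addr0.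
under eq_bigr do rewrite block_mxEdl mxE; under [X in _ + X]eq_bigr do rewrite block_mxEdr mxE.
by rewrite sumr_const card_ord big1 ?addr0 // => j _; rewrite mul0rn.
Qed.

Lemma degmx_add_hub k (c d s : R) :
  degmx (hub_mx k 0 0 c d) + s *: hub_mx k 0 0 c d =
  hub_mx k (c *+ 2) (d + c * k%:R) (s * c) (s * d).
Proof.
apply/matrixP => i j; rewrite mxE [X in _ + X]mxE /degmx mxE [X in X *+ _]mxE hub_rowsum.
case: (split_ordP i) => i' ->; case: (split_ordP j) => j' ->;
  rewrite ?block_mxEul ?block_mxEur ?block_mxEdl ?block_mxEdr !mxE ?eq_shift /=
          ?mulr0n ?add0r //;
  by case: (i' == j'); rewrite ?mulr0 ?mul0rn ?mulr0n ?mulr1n ?addr0 ?add0r.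
Qed.

Lemma laplacian_hub k (c d : R) :
  laplacian (hub_mx k 0 0 c d) = hub_mx k (c *+ 2) (d + c * k%:R) (- c) (- d).
Proof. by rewrite /laplacian -scaleN1r degmx_add_hub !mulN1r. Qed.

Lemma signless_laplacian_hub k (c d : R) :
  signless_laplacian (hub_mx k 0 0 c d) = hub_mx k (c *+ 2) (d + c * k%:R) c d.
Proof. by rewrite /signless_laplacian -[X in _ + X]scale1r degmx_add_hub !mul1r. Qed.

Lemma avg_degree_hub k (c d : R) :
  avg_degree (hub_mx k 0 0 c d) = (d *+ 2 + 4 * c * k%:R) / (k%:R + 2).
Proof.
rewrite /avg_degree; under eq_bigr do rewrite hub_rowsum.
rewrite big_split_ord !big_ord_recl big_ord0 sumr_const card_ord /= natrD.
by congr (_ / _); [rewrite -mulr_natr; ring | exact: addrC].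
Qed.

End HubLaplacian.

Section Reindex.
Variables (R : rcfType) (n : nat) (A B : 'M[R]_n) (f : 'I_n -> 'I_n).
Hypotheses (f_inj : injective f) (eqAB : forall i j, A (f i) (f j) = B i j).

Lemma rowsum_reindex i : \sum_j A (f i) j = \sum_j B i j.
Proof. by rewrite (reindex_inj f_inj); under eq_bigr do rewrite eqAB. Qed.

Lemma degmx_reindex i j : degmx A (f i) (f j) = degmx B i j.
Proof. by rewrite !mxE rowsum_reindex (inj_eq f_inj). Qed.

Lemma laplacian_reindex i j : laplacian A (f i) (f j) = laplacian B i j.
Proof. by rewrite [LHS]mxE [RHS]mxE degmx_reindex; congr (_ + _); rewrite !mxE eqAB. Qed.

Lemma signless_laplacian_reindex i j :
  signless_laplacian A (f i) (f j) = signless_laplacian B i j.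
Proof. by rewrite [LHS]mxE [RHS]mxE degmx_reindex eqAB. Qed.

Lemma avg_degree_reindex : avg_degree A = avg_degree B.
Proof.
by rewrite /avg_degree (reindex_inj f_inj); under eq_bigr do rewrite rowsum_reindex.
Qed.

End Reindex.

Lemma hub_reindex (R : rcfType) n (A : 'M[R]_n) k e (f : 'I_(2 + k) -> 'I_n) :
  injective f -> n = (2 + k)%N ->
  (forall i j, A (f i) (f j) = hub_mx k 0 0 1 e i j) ->
  [/\ char_poly A = char_poly (hub_mx k 0 0 1 e),
      char_poly (laplacian A) = char_poly (hub_mx k 2 (e + k%:R) (-1) (-e)),
      char_poly (signless_laplacian A) = char_poly (hub_mx k 2 (e + k%:R) 1 e) &
      avg_degree A = (e *+ 2 + 4 * k%:R) / (k%:R + 2)].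
Proof.
move=> f_inj eqn eqA; subst n; split.
- exact: char_poly_reindex f_inj eqA.
- by rewrite (char_poly_reindex f_inj (laplacian_reindex f_inj eqA)) laplacian_hub mul1r.
- by rewrite (char_poly_reindex f_inj (signless_laplacian_reindex f_inj eqA))
     signless_laplacian_hub mul1r.
- by rewrite (avg_degree_reindex f_inj eqA) avg_degree_hub mulr1.
Qed.

(** * The NCCC-graph of the dicyclic group *)

Section NcccAdjacency.
Variable gT : finGroupType.
Local Open Scope group_scope.

Lemma nccc_adjP (C D : {set gT}) :
  reflect (C != D /\ forall a b, a \in C -> b \in D -> ~ commute a b) (nccc_adj C D).
Proof.
apply: (iffP andP) => [[CD /forall_inP cCD] | [CD ncCD]]; split=> //.
  by move=> a b aC bD; apply/eqP; move/forall_inP: (cCD a aC); apply.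
by apply/forall_inP => a aC; apply/forall_inP => b bD; apply/eqP; apply: ncCD.
Qed.

Lemma nccc_adj_sym (C D : {set gT}) : nccc_adj C D = nccc_adj D C.
Proof.
apply/nccc_adjP/nccc_adjP => -[neqCD ncCD]; rewrite eq_sym; split=> // a b aC bD cab;
  exact: ncCD bD aC (commute_sym cab).
Qed.

Lemma nccc_adjF (C D : {set gT}) a b :
  a \in C -> b \in D -> commute a b -> nccc_adj C D = false.
Proof. by move=> aC bD cab; apply/nccc_adjP => -[_ /(_ a b aC bD)]. Qed.

End NcccAdjacency.

Section Dicyclic.
Variables (gT : finGroupType) (G : {group gT}) (x y : gT) (m : nat).
Local Open Scope group_scope.
Hypotheses (m_ge2 : (2 <= m)%N) (defG : G :=: <<[set x; y]>>) (x2m : x ^+ (2 * m) = 1)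
  (xm_y2 : x ^+ m = y ^+ 2) (conj_xy : x ^ y = x^-1) (cardG : #|G| = (4 * m)%N).

Lemma x_in_G : x \in G. Proof. by rewrite defG mem_gen // !inE eqxx. Qed.
Lemma y_in_G : y \in G. Proof. by rewrite defG mem_gen // !inE eqxx orbT. Qed.

Lemma conjXy p : (x ^+ p) ^ y = (x ^+ p)^-1.
Proof. by rewrite conjXg conj_xy expgVn. Qed.

Lemma mulyX p : y * x ^+ p = (x ^+ p)^-1 * y.
Proof. by rewrite [RHS]conjgC conjVg conjXy invgK. Qed.

Lemma expVx q : (x ^+ q)^-1 = x ^+ ((2 * m).-1 * q).
Proof.
apply/eqP; rewrite eq_invg_mul -expgD -[X in (X + _)%N]mul1n -mulnDl add1n prednK.
  by rewrite expgM x2m expg1n.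
by rewrite muln_gt0 (leq_trans _ m_ge2).
Qed.

Lemma dicyclic_elemP h : h \in G -> exists p, h = x ^+ p \/ h = x ^+ p * y.
Proof.
rewrite defG => /gen_prodgP [n [c c_xy ->]].
elim: n c c_xy => [|n IHn] c c_xy; first by exists 0%N; left; rewrite big_ord0.
rewrite big_ord_recr /=.
have [p hp] := IHn (fun i => c (widen_ord (leqnSn n) i)) (fun i => c_xy _).
have := c_xy ord_max; rewrite !inE => /orP [] /eqP ->; case: hp => ->.
- by exists p.+1; left; rewrite expgSr.
- exists (p + (2 * m).-1)%N; right.
  by rewrite -mulgA -[x in y * x]expg1 mulyX expVx muln1 mulgA -expgD.
- by exists p; right.
- by exists (p + m)%N; left; rewrite -mulgA expgD xm_y2.
Qed.

(* [G] lies in [<[x]> :|: <[x]> :* y] and [#[x] <= 2m], so [#|G| = 4m] forces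
   [#[x] = 2m] and a disjoint union. *)
Lemma order_x_coset_disjoint : #[x] = (2 * m)%N /\ forall p q, x ^+ p != x ^+ q * y.
Proof.
set C := <[x]>.
have sub : G \subset C :|: C :* y.
  apply/subsetP => h /dicyclic_elemP [p [->|->]]; rewrite inE.
    by rewrite mem_cycle.
  by rewrite mem_rcoset mulgK mem_cycle orbT.
have le1 := subset_leq_card sub.
rewrite cardsU card_rcoset -orderE cardG in le1.
have le2 : (#[x] <= 2 * m)%N.
  by apply: dvdn_leq; [rewrite muln_gt0 (leq_trans _ m_ge2) | rewrite order_dvdn x2m].
have le3 : (#|C :&: C :* y| <= #[x])%N by rewrite orderE; apply/subset_leq_card/subsetIl.
have /eqP : #|C :&: C :* y| = 0%N by lia.
rewrite cards_eq0 => /eqP CCy0; split; first by lia.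
move=> p q; apply/negP => /eqP E.
have : x ^+ p \in C :&: C :* y by rewrite inE mem_cycle E mem_rcoset mulgK mem_cycle.
by rewrite CCy0 inE.
Qed.

Lemma order_x : #[x] = (2 * m)%N. Proof. by case: order_x_coset_disjoint. Qed.

Lemma expx_neq_mulXy p q : x ^+ p != x ^+ q * y.
Proof. by case: order_x_coset_disjoint => _ ->. Qed.

Lemma eq_expx p q : (x ^+ p == x ^+ q) = (p == q %[mod 2 * m]).
Proof. by rewrite eq_expg_mod_order order_x. Qed.

Lemma expx_double_inj p q : x ^+ (p + p) = x ^+ (q + q) -> p = q %[mod m].
Proof.
by move/eqP; rewrite eq_expx !addnn -!mul2n -!muln_modr eqn_pmul2l // => /eqP.
Qed.

Lemma commute_expx_y p : commute (x ^+ p) y -> (m %| p)%N.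
Proof.
move=> cxy; have : x ^+ (p + p) = x ^+ (0 + 0).
  by rewrite expgD -{1}(invgK (x ^+ p)) -conjXy conjgE cxy mulKg mulVg.
by move/expx_double_inj; rewrite mod0n => /eqP.
Qed.

Lemma commute_mulXy p q : commute (x ^+ p * y) (x ^+ q * y) -> p = q %[mod m].
Proof.
have mulXyXy a b : x ^+ a * y * (x ^+ b * y) = x ^+ a * (x ^+ b)^-1 * (y * y).
  by rewrite -mulgA [y * (_ * _)]mulgA mulyX !mulgA.
rewrite /commute !mulXyXy => /mulIg E; apply: expx_double_inj.
rewrite !expgD; transitivity (x ^+ p * (x ^+ q)^-1 * (x ^+ q * x ^+ p)).
  by rewrite -mulgA mulKg.
by rewrite E (commuteX2 q p (commute_refl x)) -mulgA mulKg.
Qed.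

Lemma class_expx i z : z \in (x ^+ i) ^: G -> z = x ^+ i \/ z = (x ^+ i)^-1.
Proof.
have conjXX q : (x ^+ i) ^ (x ^+ q) = x ^+ i.
  by rewrite conjgE (commuteX2 i q (commute_refl x)) mulKg.
case/imsetP => h /dicyclic_elemP [q [->|->]] ->; first by left.
by right; rewrite conjgM conjXX conjXy.
Qed.

Lemma conj_mulXy_expx j r : (x ^+ (j + j + r) * y) ^ (x ^+ j) = x ^+ r * y.
Proof.
by rewrite conjgE -!mulgA mulyX -(addnA j j r) (addnC j r) !expgD -!mulgA mulKg mulKVg.
Qed.

Lemma class_mulXy_odd p : (x ^+ p * y) ^: G = (x ^+ odd p * y) ^: G.
Proof.
rewrite -(classGidl _ (groupX p./2 x_in_G)) -{1}(odd_double_half p) addnC -addnn.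
by rewrite conj_mulXy_expx.
Qed.

(* Parity survives conjugation because [x] has even order [2m]. *)
Lemma class_mulXy p z :
  z \in (x ^+ p * y) ^: G -> exists2 p', odd p' = odd p & z = x ^+ p' * y.
Proof.
set n := (2 * m).-1.
have odd_n : odd n by rewrite /n -subn1 oddB ?oddM // muln_gt0 (leq_trans _ m_ge2).
have conj_x q r : (x ^+ r * y) ^ (x ^+ q) = x ^+ (n * q + r + n * q) * y.
  by rewrite conjgE -!mulgA mulyX expVx !mulgA -!expgD.
have odd_conj_x q r : odd (n * q + r + n * q) = odd r.
  by rewrite addnAC addnn oddD odd_double.
case/imsetP => h /dicyclic_elemP [q [->|->]] ->.
  by exists (n * q + p + n * q)%N; rewrite ?odd_conj_x ?conj_x.
exists (n * (n * q + p + n * q))%N; first by rewrite oddM odd_n odd_conj_x.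
by rewrite conjgM conj_x conjMg conjXy expVx conjgE mulKg.
Qed.

Lemma expx_m_in_center : x ^+ m \in 'Z(G).
Proof.
apply/centerP; split=> [|h /dicyclic_elemP [q [->|->]]]; first exact: groupX x_in_G.
  exact: commuteX2 (commute_refl x).
apply: commuteM; first exact: commuteX2 (commute_refl x).
by rewrite xm_y2; apply/commute_sym/commuteX.
Qed.

Lemma mulXy_notin_center p : x ^+ p * y \notin 'Z(G).
Proof.
apply/centerP => -[_ /(_ x x_in_G)].
rewrite /commute mulgA (commuteX p (commute_refl x)) -!mulgA => /mulgI cxy.
have /commute_expx_y : commute (x ^+ 1) y by rewrite expg1.
by rewrite dvdn1 => /eqP m1; move: m_ge2; rewrite m1.
Qed.

Lemma expx_notin_center l : (0 < l < m)%N -> x ^+ l \notin 'Z(G).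
Proof.
case/andP=> l_gt0 l_lt_m; apply/centerP => -[_ /(_ y y_in_G) /commute_expx_y].
by move/(dvdn_leq l_gt0); rewrite leqNgt l_lt_m.
Qed.

Lemma odd_class_mulXy p q : x ^+ q * y \in (x ^+ p * y) ^: G -> odd q = odd p.
Proof.
case/class_mulXy => p' <- /mulIg /eqP; rewrite eq_expx => /eqP /(congr1 odd).
by rewrite !odd_mod // oddM.
Qed.

Lemma class_mulXy_neq_expx p l : (x ^+ p * y) ^: G != (x ^+ l) ^: G.
Proof.
apply/eqP => E; have := class_refl G (x ^+ p * y); rewrite E => /class_expx [].
  by move/eqP; rewrite eq_sym (negbTE (expx_neq_mulXy _ _)).
by rewrite expVx => /eqP; rewrite eq_sym (negbTE (expx_neq_mulXy _ _)).
Qed.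

Lemma class_expx_inj l l' : (0 < l < m)%N -> (0 < l' < m)%N ->
  (x ^+ l) ^: G = (x ^+ l') ^: G -> l = l'.
Proof.
move=> /andP [l_gt0 l_lt_m] /andP [l'_gt0 l'_lt_m] E.
have := class_refl G (x ^+ l'); rewrite -E => /class_expx [/eqP | E'].
  by rewrite eq_expx !modn_small; [move/eqP | lia | lia].
have /eqP : x ^+ (l' + l) = x ^+ 0 by rewrite expgD E' mulVg.
by rewrite eq_expx mod0n modn_small; [move/eqP; lia | lia].
Qed.

Lemma nccc_adj_mulXy_expx p l :
  (0 < l < m)%N -> nccc_adj ((x ^+ p * y) ^: G) ((x ^+ l) ^: G).
Proof.
case/andP=> l_gt0 l_lt_m; apply/nccc_adjP; split; first exact: class_mulXy_neq_expx.
move=> a b /class_mulXy [p' _ ->] b_cl c_ab.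
have c_xl : commute (x ^+ l) (x ^+ p' * y).
  by apply/commute_sym; case/class_expx: b_cl c_ab => -> // /commuteV; rewrite invgK.
have : commute (x ^+ l) y.
  by move: c_xl; rewrite /commute mulgA (commuteX2 l p' (commute_refl x)) -!mulgA => /mulgI.
by move/commute_expx_y/(dvdn_leq l_gt0); rewrite leqNgt l_lt_m.
Qed.

Lemma nccc_adj_expx l l' : nccc_adj ((x ^+ l) ^: G) ((x ^+ l') ^: G) = false.
Proof. exact: nccc_adjF (class_refl _ _) (class_refl _ _) (commuteX2 l l' (commute_refl x)). Qed.

Lemma nccc_adj_mulXy p q :
  odd p != odd q -> nccc_adj ((x ^+ p * y) ^: G) ((x ^+ q * y) ^: G) = ~~ odd m.
Proof.
move=> odd_pq; case: (boolP (odd m)) => odd_m /=.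
  have odd_qm : odd (q + m) = odd p by rewrite oddD odd_m; case: (odd p) (odd q) odd_pq => [] [].
  apply: (nccc_adjF (a := x ^+ (q + m) * y) _ (class_refl G _)).
    by rewrite class_mulXy_odd -odd_qm -class_mulXy_odd class_refl.
  rewrite addnC expgD -mulgA; apply/commute_sym/commuteM => //; apply/commute_sym.
  by move/centerP: expx_m_in_center => [_]; apply; rewrite groupM ?groupX ?x_in_G ?y_in_G.
apply/nccc_adjP; split.
  apply/eqP => E; move: odd_pq; have := class_refl G (x ^+ q * y).
  by rewrite -E => /odd_class_mulXy ->; rewrite eqxx.
move=> a b /class_mulXy [p' op' ->] /class_mulXy [q' oq' ->] /commute_mulXy /(congr1 odd).
by rewrite !odd_mod ?(negbTE odd_m) // op' oq' => E; move: odd_pq; rewrite E eqxx.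
Qed.

Definition dicyclic_class (i : 'I_(2 + m.-1)) : {set gT} :=
  match split i with
  | inl j => (x ^+ j * y) ^: G
  | inr l => (x ^+ l.+1) ^: G
  end.

Lemma dicyclic_class_lshift j : dicyclic_class (lshift _ j) = (x ^+ j * y) ^: G.
Proof. by rewrite /dicyclic_class (unsplitK (inl _ j)). Qed.

Lemma dicyclic_class_rshift l : dicyclic_class (rshift 2 l) = (x ^+ l.+1) ^: G.
Proof. by rewrite /dicyclic_class (unsplitK (inr _ l)). Qed.

Lemma succ_ord_pred_bounds (l : 'I_m.-1) : (0 < l.+1 < m)%N.
Proof. by have := ltn_ord l; lia. Qed.

Lemma dicyclic_class_in_vertices i : dicyclic_class i \in nccc_vertices G.
Proof.
case: (split_ordP i) => [j|l] ->; rewrite ?dicyclic_class_lshift ?dicyclic_class_rshift;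
  apply: imset_f; rewrite inE ?mulXy_notin_center ?expx_notin_center ?succ_ord_pred_bounds //=;
  by rewrite ?groupM ?groupX ?x_in_G ?y_in_G.
Qed.

Lemma dicyclic_class_inj : injective dicyclic_class.
Proof.
move=> i i'; case: (split_ordP i) => [j|l] ->; case: (split_ordP i') => [j'|l'] ->;
  rewrite ?dicyclic_class_lshift ?dicyclic_class_rshift => E.
- congr lshift; apply/val_inj; have := class_refl G (x ^+ j' * y).
  by rewrite -E => /odd_class_mulXy; case: j j' {E} => [[|[|//]] ?] [[|[|//]] ?].
- by move: (class_mulXy_neq_expx j l'.+1); rewrite E eqxx.
- by move: (class_mulXy_neq_expx j' l.+1); rewrite E eqxx.
- congr rshift; apply/val_inj/succn_inj.
  exact: class_expx_inj (succ_ord_pred_bounds l) (succ_ord_pred_bounds l') E.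
Qed.

Lemma class_expx_small r : (0 < r < m)%N -> exists i, (x ^+ r) ^: G = dicyclic_class i.
Proof.
move=> r_bounds; have lt_r : (r.-1 < m.-1)%N by lia.
by exists (rshift 2 (Ordinal lt_r)); rewrite dicyclic_class_rshift /= prednK //; lia.
Qed.

Lemma dicyclic_class_onto C : C \in nccc_vertices G -> exists i, C = dicyclic_class i.
Proof.
case/imsetP => z /setDP [zG zZ] ->; case: (dicyclic_elemP zG) => p [Ez | ->]; last first.
  have lt_odd : (odd p < 2)%N by case: odd.
  by exists (lshift _ (Ordinal lt_odd)); rewrite dicyclic_class_lshift class_mulXy_odd.
move: zZ; rewrite Ez -expg_mod_order order_x; set r := (p %% _)%N => zZ.
have r_lt : (r < 2 * m)%N by rewrite ltn_mod muln_gt0 (leq_trans _ m_ge2).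
have r_neq0 : r != 0%N by apply: contraNneq zZ => ->; rewrite group1.
have r_neqm : r != m by apply: contraNneq zZ => ->; exact: expx_m_in_center.
case: (ltnP r m) => [r_lt_m | m_le_r]; first by apply: class_expx_small; lia.
rewrite -(classGidl _ y_in_G) conjXy.
have -> : (x ^+ r)^-1 = x ^+ (2 * m - r).
  by apply/eqP; rewrite eq_invg_mul -expgD subnKC ?x2m // ltnW.
by apply: class_expx_small; lia.
Qed.

Lemma nccc_adj_dicyclic_class (R : idomainType) i i' :
  (nccc_adj (dicyclic_class i) (dicyclic_class i'))%:R =
  (hub_mx m.-1 0 0 1 (if odd m then 0 else 1) i i' :> R)%R.
Proof.
case: (split_ordP i) => [j|l] ->; case: (split_ordP i') => [j'|l'] ->;
  rewrite ?block_mxEul ?block_mxEur ?block_mxEdl ?block_mxEdr !mxE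
          ?dicyclic_class_lshift ?dicyclic_class_rshift.
- case: (eqVneq j j') => [<-|neq_jj']; first by rewrite /nccc_adj eqxx.
  rewrite nccc_adj_mulXy; first by case: (odd m).
  by case: j j' neq_jj' => [[|[|//]] ?] [[|[|//]] ?].
- by rewrite nccc_adj_mulXy_expx ?succ_ord_pred_bounds.
- by rewrite nccc_adj_sym nccc_adj_mulXy_expx ?succ_ord_pred_bounds.
- by rewrite nccc_adj_expx mul0rn.
Qed.

Lemma nccc_adjmx_dicyclic (R : rcfType) :
  exists f : 'I_(2 + m.-1) -> 'I_#|nccc_vertices G|,
  [/\ injective f, #|nccc_vertices G| = (2 + m.-1)%N &
      forall i j, nccc_adjmx R G (f i) (f j) = (hub_mx m.-1 0 0 1 (if odd m then 0 else 1) i j)%R].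
Proof.
have V0 := dicyclic_class_in_vertices (Ordinal (isT : (0 < 2 + m.-1)%N)).
pose f i := enum_rank_in V0 (dicyclic_class i).
have fK i : enum_val (f i) = dicyclic_class i.
  exact: enum_rankK_in (dicyclic_class_in_vertices i).
exists f; split.
- by move=> i j /(congr1 enum_val); rewrite !fK; exact: dicyclic_class_inj.
- have -> : nccc_vertices G = dicyclic_class @: setT.
    apply/setP => C; apply/idP/imsetP => [/dicyclic_class_onto [i ->] | [i _ ->]].
      by exists i.
    exact: dicyclic_class_in_vertices.
  by rewrite card_imset ?cardsT ?card_ord //; exact: dicyclic_class_inj.
- by move=> i j; rewrite mxE !fK nccc_adj_dicyclic_class.
Qed.

End Dicyclic.

(** * Spectra and energies *)

Section DicyclicSpectra.
Variable R : rcfType.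

Definition adj_spec_even m : seq R :=
  nseq (m - 2) 0 ++ [:: -1; (1 + Num.sqrt (8 * m%:R - 7)) / 2;
                            (1 - Num.sqrt (8 * m%:R - 7)) / 2].

Definition lap_spec_even m : seq R :=
  [:: 0] ++ nseq (m - 2) 2 ++ [:: m%:R + 1; m%:R + 1].

Definition signless_spec_even m : seq R :=
  nseq (m - 2) 2 ++ [:: m%:R - 1; (m%:R + 3 + Num.sqrt ((m%:R - 1) * (m%:R + 7))) / 2;
                                  (m%:R + 3 - Num.sqrt ((m%:R - 1) * (m%:R + 7))) / 2].

Definition adj_spec_odd m : seq R :=
  nseq (m - 1) 0 ++ [:: 2 * Num.sqrt ((m%:R - 1) / 2); - (2 * Num.sqrt ((m%:R - 1) / 2))].

Definition lap_spec_odd m : seq R := [:: 0] ++ nseq (m - 2) 2 ++ [:: m%:R - 1; m%:R + 1].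

Lemma adj_spectrum_even m : (2 <= m)%N ->
  is_spectrum (hub_mx m.-1 0 0 1 1) (adj_spec_even m).
Proof.
case: m => [//|k] /= k_gt0; rewrite /is_spectrum /adj_spec_even char_poly_hub // big_cat prodr_nseq.
rewrite !big_cons big_nil subn2 /= -mulrA; congr (_ * _).
set s := Num.sqrt _; have s2 : s ^+ 2 = 8 * k.+1%:R - 7.
  by rewrite sqr_sqrtr // -natr1; have : (0 <= k%:R :> R) by []; lra.
rewrite mulr1 [X in _ = _ * X](@mulXsubC_vieta _ _ _ 1 (- (k%:R * 2))).
- by rewrite !polyCD !polyCN !polyCM !polyC_natr; ring.
- by field.
- rewrite (_ : (1 + s) / 2 * ((1 - s) / 2) = (1 - s ^+ 2) / 4); last by field.
  by rewrite s2 -natr1; field.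
Qed.

Lemma adj_spectrum_odd m : (2 <= m)%N ->
  is_spectrum (hub_mx m.-1 0 0 1 0) (adj_spec_odd m).
Proof.
case: m => [//|k] /= k_gt0; rewrite /is_spectrum /adj_spec_odd char_poly_hub // big_cat prodr_nseq.
rewrite !big_cons big_nil subn1 /= subrr addr0 polyC0 !subr0 -exprSr prednK // -mulrA.
congr (_ * _); set s := Num.sqrt _; have s2 : s ^+ 2 = (k.+1%:R - 1) / 2.
  by rewrite sqr_sqrtr // -natr1; have : (0 <= k%:R :> R) by []; lra.
rewrite mulr1 [X in _ = X](@mulXsubC_vieta _ _ _ 0 (- (k%:R * 2))).
- by rewrite polyC0 !polyCN !polyCM !polyC_natr; ring.
- by rewrite addrN.
- rewrite (_ : 2 * s * - (2 * s) = - 4 * s ^+ 2); last by ring.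
  by rewrite s2 -natr1; field.
Qed.

Lemma lap_spectrum_even m : (2 <= m)%N ->
  is_spectrum (hub_mx m.-1 2 (1 + m.-1%:R) (-1) (-1)) (lap_spec_even m).
Proof.
case: m => [//|k] /= k_gt0; rewrite /is_spectrum /lap_spec_even char_poly_hub //.
rewrite !big_cat prodr_nseq !big_cons !big_nil subn2 /=.
move: (('X - 2%:P) ^+ k.-1) => P.
by rewrite -natr1 !polyCD !polyCN !polyCM !polyC_natr; ring.
Qed.

Lemma signless_spectrum_even m : (2 <= m)%N ->
  is_spectrum (hub_mx m.-1 2 (1 + m.-1%:R) 1 1) (signless_spec_even m).
Proof.
case: m => [//|k] /= k_gt0; rewrite /is_spectrum /signless_spec_even char_poly_hub //.
rewrite !big_cat prodr_nseq !big_cons !big_nil subn2 /=.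
set s := Num.sqrt _; have s2 : s ^+ 2 = (k.+1%:R - 1) * (k.+1%:R + 7).
  by rewrite sqr_sqrtr // -natr1; have : (0 <= k%:R :> R) by []; nra.
rewrite mulr1 [X in _ = _ * (_ * X)](@mulXsubC_vieta _ _ _ (k.+1%:R + 3) 4).
- move: (('X - 2%:P) ^+ k.-1) => P.
  by rewrite -natr1 !polyCD !polyCN !polyCM !polyC_natr; ring.
- by field.
- rewrite (_ : (k.+1%:R + 3 + s) / 2 * ((k.+1%:R + 3 - s) / 2) =
               ((k.+1%:R + 3) ^+ 2 - s ^+ 2) / 4); last by field.
  by rewrite s2; field.
Qed.

(* The Laplacian and the signless Laplacian differ only in the sign [c] of the
   hub-to-rim entries, which enters the characteristic polynomial squared. *)
Lemma lap_spectrum_odd m (c : R) : (2 <= m)%N -> c ^+ 2 = 1 ->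
  is_spectrum (hub_mx m.-1 2 m.-1%:R c 0) (lap_spec_odd m).
Proof.
case: m => [//|k] /= k_gt0 c2; rewrite /is_spectrum /lap_spec_odd char_poly_hub // c2.
rewrite !big_cat prodr_nseq !big_cons !big_nil subn2 /=.
move: (('X - 2%:P) ^+ k.-1) => P.
by rewrite -natr1 !polyCD !polyCN !polyCM !polyC_natr; ring.
Qed.

Lemma adj_energy_even m : (2 <= m)%N ->
  spec_energy (hub_mx m.-1 0 0 1 1 : 'M[R]_(2 + m.-1)) 0 (1 + Num.sqrt (8 * m%:R - 7)).
Proof.
move=> m_ge2; exists (adj_spec_even m); split; first exact: adj_spectrum_even.
case: m m_ge2 => [//|k] /= k_gt0; rewrite /adj_spec_even big_cat /= sumr_nseq !big_cons big_nil.
rewrite !subr0 normr0 mul0rn add0r normrN normr1.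
set s := Num.sqrt _; have s2 : s ^+ 2 = 8 * k.+1%:R - 7.
  by rewrite sqr_sqrtr // -natr1; have : (0 <= k%:R :> R) by []; lra.
have k_ge1 : 1 <= k%:R :> R by rewrite ler1n.
have s_ge0 : 0 <= s := sqrtr_ge0 _.
have s_ge1 : 1 <= s by rewrite -natr1 in s2; nra.
by rewrite ger0_norm ?ler0_norm; lra.
Qed.

Lemma adj_energy_odd m : (2 <= m)%N ->
  spec_energy (hub_mx m.-1 0 0 1 0 : 'M[R]_(2 + m.-1)) 0 (4 * Num.sqrt ((m%:R - 1) / 2)).
Proof.
move=> m_ge2; exists (adj_spec_odd m); split; first exact: adj_spectrum_odd.
rewrite /adj_spec_odd big_cat /= sumr_nseq !big_cons big_nil !subr0 normr0 mul0rn add0r normrN.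
by rewrite ger0_norm ?mulr_ge0 ?sqrtr_ge0 //; lra.
Qed.

Lemma lap_energy_even m : (2 <= m)%N ->
  spec_energy (hub_mx m.-1 2 (1 + m.-1%:R) (-1) (-1) : 'M[R]_(2 + m.-1))
    ((2 + 4 * m.-1%:R) / (m.-1%:R + 2)) (4 * (m%:R - 1) * (m%:R - 2) / (m%:R + 1) + 4).
Proof.
move=> m_ge2; exists (lap_spec_even m); split; first exact: lap_spectrum_even.
case: m m_ge2 => [|[|k]] // _; rewrite /lap_spec_even !big_cat /= sumr_nseq !big_cons !big_nil.
rewrite subn2 /= -[_ *+ k]mulr_natr -[k.+2]addn2 -[k.+1]addn1 !natrD sub0r normrN !addr0.
set D := (_ / _).
have k_ge0 : 0 <= k%:R :> R by [].
have hD : D * (k%:R + 3) = 4 * k%:R + 6 by rewrite /D; field; apply/lt0r_neq0; lra.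
have D_ge2 : 2 <= D by nra.
have D_le : D <= k%:R + 3 by nra.
rewrite (ger0_norm (_ : 0 <= D)) ?(ler0_norm (_ : 2 - D <= 0))
  ?(ger0_norm (_ : 0 <= k%:R + 2 + 1 - D)); try lra.
by rewrite /D; field; apply/lt0r_neq0; lra.
Qed.

(* For [m = 3] the average degree exceeds the eigenvalue [M - 1] and the
   formula fails. *)
Lemma signless_energy_even m : (2 <= m)%N -> m != 3 ->
  spec_energy (hub_mx m.-1 2 (1 + m.-1%:R) 1 1 : 'M[R]_(2 + m.-1))
    ((2 + 4 * m.-1%:R) / (m.-1%:R + 2))
    (if m == 2 then 4 else 4 * (m%:R - 1) * (m%:R - 2) / (m%:R + 1)
                           + (m%:R - 1) * (Num.sqrt (1 + 8 / (m%:R - 1)) - 1)).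
Proof.
move=> m_ge2 m_neq3; exists (signless_spec_even m); split; first exact: signless_spectrum_even.
case: m m_ge2 m_neq3 => [|[|[|[|k]]]] // _ _;
  rewrite /signless_spec_even big_cat ?sumr_nseq !big_cons big_nil /=.
- have -> : Num.sqrt ((2 - 1) * (2 + 7)) = 3 :> R.
    by rewrite (_ : (2 - 1) * (2 + 7) = 3 ^+ 2) ?sqrtr_sqr ?ger0_norm //; ring.
  rewrite (_ : (2 + 4 * 1) / (1 + 2) = 2 :> R) ?subnn ?mulr0n; last by field.
  rewrite (ler0_norm (_ : 2 - 1 - 2 <= 0)) ?(ger0_norm (_ : 0 <= (2 + 3 + 3) / 2 - 2))
    ?(ler0_norm (_ : (2 + 3 - 3) / 2 - 2 <= 0)); lra.
- rewrite subn2 /= -[_ *+ k.+2]mulr_natr -[k.+4]addn4 -[k.+3]addn3 -[k.+2]addn2 !natrD.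
  set D := (2 + 4 * _) / _; set s := Num.sqrt (_ * _).
  have k_ge0 : 0 <= k%:R :> R by [].
  have hD : D * (k%:R + 5) = 4 * k%:R + 14 by rewrite /D; field; apply/lt0r_neq0; lra.
  have [D_ge2 D_le4] : 2 <= D /\ D <= 4 by split; nra.
  have s_ge0 : 0 <= s := sqrtr_ge0 _.
  have s2 : s ^+ 2 = (k%:R + 3) * (k%:R + 11) by rewrite sqr_sqrtr; [ring | nra].
  have s_ge : k%:R + 3 <= s by nra.
  have hs : (k%:R + 4 - 1) * Num.sqrt (1 + 8 / (k%:R + 4 - 1)) = s.
    rewrite /s; have -> : (k%:R + 4 - 1) * (k%:R + 4 + 7) =
              (k%:R + 4 - 1) ^+ 2 * (1 + 8 / (k%:R + 4 - 1)) :> R.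
      by field; apply/lt0r_neq0; lra.
    by rewrite sqrtrM ?sqr_ge0 // sqrtr_sqr ger0_norm //; lra.
  rewrite (mulrBr (k%:R + 4 - 1)) hs (ler0_norm (_ : 2 - D <= 0))
    ?(ger0_norm (_ : 0 <= k%:R + 4 - 1 - D))
    ?(ger0_norm (_ : 0 <= (k%:R + 4 + 3 + s) / 2 - D))
    ?(ler0_norm (_ : (k%:R + 4 + 3 - s) / 2 - D <= 0)); try nra.
  by rewrite /D; field; apply/lt0r_neq0; lra.
Qed.

Lemma lap_energy_odd m (c : R) : (3 <= m)%N -> c ^+ 2 = 1 ->
  spec_energy (hub_mx m.-1 2 m.-1%:R c 0 : 'M[R]_(2 + m.-1))
    (4 * m.-1%:R / (m.-1%:R + 2)) (4 * (m%:R - 1) * (m%:R - 3) / (m%:R + 1) + 4).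
Proof.
move=> m_ge3 c2; exists (lap_spec_odd m); split; first exact: lap_spectrum_odd (ltnW m_ge3) c2.
case: m m_ge3 => [|[|[|k]]] // _; rewrite /lap_spec_odd !big_cat sumr_nseq !big_cons !big_nil.
rewrite subn2 /= -[_ *+ k.+1]mulr_natr -[k.+3]addn3 -[k.+2]addn2 -[k.+1]addn1 !natrD.
rewrite sub0r normrN !addr0; set D := (4 * _) / _.
have k_ge0 : 0 <= k%:R :> R by [].
have hD : D * (k%:R + 4) = 4 * k%:R + 8 by rewrite /D; field; apply/lt0r_neq0; lra.
have [D_ge2 D_le] : 2 <= D /\ D <= k%:R + 2 by split; nra.
rewrite (ger0_norm (_ : 0 <= D)) ?(ler0_norm (_ : 2 - D <= 0))
  ?(ger0_norm (_ : 0 <= k%:R + 3 - 1 - D)) ?(ger0_norm (_ : 0 <= k%:R + 3 + 1 - D)); try lra.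
by rewrite /D; field; apply/lt0r_neq0; lra.
Qed.

End DicyclicSpectra.

Theorem corollary2p7 (R : rcfType) (gT : finGroupType) (G : {group gT})
    (x y : gT) (m : nat) :
  (2 <= m)%N ->
  G :=: <<[set x; y]>>%g ->
  (x ^+ (2 * m) = 1)%g -> (x ^+ m = y ^+ 2)%g -> (x ^ y = x^-1)%g ->
  #|G| = (4 * m)%N ->
  let A := nccc_adjmx R G in
  let L := laplacian A in
  let Q := signless_laplacian A in
  let D := avg_degree A in
  let M := m%:R : R in
  (~~ odd m ->
     is_spectrum A (nseq (m - 2) 0 ++
        [:: -1; (1 + Num.sqrt (8 * M - 7)) / 2; (1 - Num.sqrt (8 * M - 7)) / 2])
   /\ spec_energy A 0 (1 + Num.sqrt (8 * M - 7))
   /\ is_spectrum L ([:: 0] ++ nseq (m - 2) 2 ++ [:: M + 1; M + 1])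
   /\ spec_energy L D (4 * (M - 1) * (M - 2) / (M + 1) + 4)
   /\ is_spectrum Q (nseq (m - 2) 2 ++
        [:: M - 1; (M + 3 + Num.sqrt ((M - 1) * (M + 7))) / 2;
                   (M + 3 - Num.sqrt ((M - 1) * (M + 7))) / 2])
   /\ spec_energy Q D
        (if m == 2%N then 4
         else 4 * (M - 1) * (M - 2) / (M + 1)
              + (M - 1) * (Num.sqrt (1 + 8 / (M - 1)) - 1)))
  /\
  (odd m ->
     is_spectrum A (nseq (m - 1) 0 ++
        [:: 2 * Num.sqrt ((M - 1) / 2); - (2 * Num.sqrt ((M - 1) / 2))])
   /\ spec_energy A 0 (4 * Num.sqrt ((M - 1) / 2))
   /\ is_spectrum L ([:: 0] ++ nseq (m - 2) 2 ++ [:: M - 1; M + 1])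
   /\ is_spectrum Q ([:: 0] ++ nseq (m - 2) 2 ++ [:: M - 1; M + 1])
   /\ spec_energy L D (4 * (M - 1) * (M - 3) / (M + 1) + 4)
   /\ spec_energy Q D (4 * (M - 1) * (M - 3) / (M + 1) + 4)).
Proof.
move=> m_ge2 defG x2m xm_y2 conj_xy cardG A L Q D M.
have [f [f_inj cardV adjA]] := nccc_adjmx_dicyclic m_ge2 defG x2m xm_y2 conj_xy cardG R.
have [charA charL charQ avgD] := hub_reindex f_inj cardV adjA.
split=> [even_m | odd_m].
- rewrite (negbTE even_m) /= in charA charL charQ avgD.
  rewrite /spec_energy /is_spectrum /L /Q /D charA charL charQ avgD.
  have m_neq3 : m != 3 by apply: contraNneq even_m => ->.
  split; first exact: adj_spectrum_even.
  split; first exact: adj_energy_even.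
  split; first exact: lap_spectrum_even.
  split; first exact: lap_energy_even.
  by split; [exact: signless_spectrum_even | exact: signless_energy_even].
- rewrite odd_m /= ?mul0rn ?add0r ?oppr0 in charA charL charQ avgD.
  rewrite /spec_energy /is_spectrum /L /Q /D charA charL charQ avgD.
  have m_ge3 : (3 <= m)%N by rewrite ltn_neqAle m_ge2 andbT; apply: contraTneq odd_m => <-.
  have sqrN1 : (-1 : R) ^+ 2 = 1 by rewrite sqrrN expr1n.
  split; first exact: adj_spectrum_odd.
  split; first exact: adj_energy_odd.
  split; first exact: lap_spectrum_odd sqrN1.
  split; first exact: lap_spectrum_odd (expr1n _ _).
  by split; [exact: lap_energy_odd sqrN1 | exact: lap_energy_odd (expr1n _ _)].
Qed.
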